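(* Let $\Delta,\Sigma$ be alphabets, $\varphi:\Delta\to2^{\Sigma^*}$ a regular language substitution, and $K_1,K_2\subseteq\Delta^+$ regular languages such that $\mathcal{R}_1=(K_1,\varphi)$ and $\mathcal{R}_2=(K_2,\varphi)$ are finite. Then the set difference $\mathcal{R}_1-\mathcal{R}_2$ is a finite rational set of regular languages expressible as $(K_3,\varphi)$ for some regular language $K_3\subseteq K_1$.
   Context: A regular language substitution $\varphi:\Delta\to2^{\Sigma^*}$ maps each symbol to a regular language over $\Sigma$, extended by $\varphi(\delta w)=\varphi(\delta)\varphi(w)$. For $K\subseteq\Delta^+$, $(K,\varphi)=\{\varphi(w)\mid w\in K\}$; when $K$ is regular this set is a rational set of regular languages. *)

(* alphabets are finTypes, words are seq's, languages are
   Prop-valued predicates on words, compared extensionally. *)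
From mathcomp Require Import all_boot.
Set Implicit Arguments. Unset Strict Implicit. Unset Printing Implicit Defensive.

Definition lang (A : finType) := seq A -> Prop.

Definition lang_eq (A : finType) (L M : lang A) : Prop := forall u, L u <-> M u.

Definition regular (A : finType) (L : lang A) : Prop :=
  exists (Q : finType) (q0 : Q) (d : Q -> A -> Q) (F : pred Q),
    forall u, L u <-> F (foldl d q0 u).

Definition conc (A : finType) (L M : lang A) : lang A :=
  fun u => exists u1 u2, u = u1 ++ u2 /\ L u1 /\ M u2.
Definition eps_lang (A : finType) : lang A := fun u => u = [::].

Definition reg_subst (D S : finType) (phi : D -> lang S) : Prop :=
  forall d, regular (phi d).

Fixpoint subst_word (D S : finType) (phi : D -> lang S) (w : seq D) : lang S :=
  match w with
  | [::] => @eps_lang S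
  | d :: w' => conc (phi d) (subst_word phi w')
  end.

Definition in_plus (D : finType) (K : lang D) : Prop := forall w, K w -> w <> [::].

Definition in_RS (D S : finType) (K : lang D) (phi : D -> lang S) (L : lang S) : Prop :=
  exists w, K w /\ lang_eq L (subst_word phi w).

Definition RS_finite (D S : finType) (K : lang D) (phi : D -> lang S) : Prop :=
  exists (n : nat) (f : 'I_n -> lang S),
    forall L, in_RS K phi L -> exists i, lang_eq L (f i).

(* Only the finiteness of (K1, phi) matters: choose, for each of its finitely
   many languages that is not in (K2, phi), one word of K1 representing it.
   The resulting finite set of words K3 is regular, and (K3, phi) is exactly
   the difference.  Choosing representatives is classical. *)

From mathcomp Require Import all_boot.
From Stdlib Require Import Classical.

Set Implicit Arguments. Unset Strict Implicit. Unset Printing Implicit Defensive.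

Section FiniteLanguages.
Variable A : finType.

Lemma regular_ext (L M : lang A) : lang_eq L M -> regular L -> regular M.
Proof.
move=> eqLM [Q [q0 [d [F recL]]]]; exists Q, q0, d, F => u.
by rewrite -eqLM; exact: recL.
Qed.

Lemma regular_pred0 : regular (fun _ : seq A => False).
Proof. by exists unit, tt, (fun _ _ => tt), pred0. Qed.

Lemma regular_or (L M : lang A) :
  regular L -> regular M -> regular (fun u => L u \/ M u).
Proof.
move=> [Q1 [q1 [d1 [F1 recL]]]] [Q2 [q2 [d2 [F2 recM]]]].
pose d (q : Q1 * Q2) a := (d1 q.1 a, d2 q.2 a).
have foldl_d u p1 p2 : foldl d (p1, p2) u = (foldl d1 p1 u, foldl d2 p2 u).
  by elim: u p1 p2 => [|a u IHu] p1 p2 //=; rewrite IHu.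
exists (Q1 * Q2)%type, (q1, q2), d, (fun q => F1 q.1 || F2 q.2) => u.
rewrite foldl_d /= recL recM.
by split=> [[] -> | /orP []]; rewrite ?orbT; auto.
Qed.

(* The automaton reading u from state [Some q] accepts iff u is the suffix of
   w after its first q letters; [None] is the sink. *)
Lemma regular_eq1 (w : seq A) : regular (fun u => u = w).
Proof.
set k := size w.
pose d (q : option 'I_k.+1) (a : A) : option 'I_k.+1 :=
  if q is Some q then
    if (q < k) && (nth a w q == a) then Some (inord q.+1) else None
  else None.
have foldl_sink u : foldl d None u = None by elim: u.
have accepts u (q : 'I_k.+1) :
    (foldl d (Some q) u == Some ord_max) = (u == drop q w).
  elim: u q => [|a u IHu] q /=.
    rewrite [[::] == _]eq_sym -size_eq0 size_drop -/k subn_eq0.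
    apply/eqP/idP => [[->] // | le_kq].
    congr Some; apply: val_inj; apply/eqP.
    by rewrite /= eqn_leq le_kq -ltnS ltn_ord.
  rewrite {1}/d; case: ifP => [/andP [lt_qk /eqP nth_q] | not_next].
    by rewrite IHu inordK // (drop_nth a lt_qk) nth_q eqseq_cons eqxx.
  rewrite foldl_sink; symmetry; apply/negbTE.
  case: (ltnP q k) not_next => [lt_qk | le_kq] /=; last by rewrite drop_oversize.
  by rewrite (drop_nth a lt_qk) eqseq_cons eq_sym => ->.
exists (option 'I_k.+1), (Some ord0), d, (pred1 (Some ord_max)) => u /=.
by rewrite accepts drop0; split=> [-> | /eqP].
Qed.

Lemma regular_mem (s : seq (seq A)) : regular (fun u => u \in s).
Proof.
elim: s => [|w s IHs].
  by apply: regular_ext regular_pred0 => u.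
apply: regular_ext (regular_or (regular_eq1 w) IHs) => u.
by rewrite in_cons; split=> [[-> | ->] | /orP [/eqP | ]]; rewrite ?eqxx ?orbT; auto.
Qed.

Lemma regular_finite_image (I : finType) (g : I -> option (seq A)) :
  regular (fun u => exists i, g i = Some u).
Proof.
apply: regular_ext (regular_mem (pmap g (enum I))) => u.
rewrite mem_pmap; split => [/mapP [i _ ->] | [i <-]]; first by exists i.
by apply: map_f; rewrite mem_enum.
Qed.

End FiniteLanguages.

Lemma lang_eq_sym (A : finType) (L M : lang A) : lang_eq L M -> lang_eq M L.
Proof. by move=> eqLM u; rewrite eqLM. Qed.

Lemma lang_eq_trans (A : finType) (L M N : lang A) :
  lang_eq L M -> lang_eq M N -> lang_eq L N.
Proof. by move=> eqLM eqMN u; rewrite eqLM eqMN. Qed.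

Lemma fin_option_choice (I : finType) (T : Type) (P : I -> T -> Prop) :
  exists g : I -> option T, forall i,
    (forall x, g i = Some x -> P i x) /\ ((exists x, P i x) -> exists x, g i = Some x).
Proof.
apply: (@fin_all_exists _ (fun=> option T)
  (fun i o => (forall x, o = Some x -> P i x) /\ ((exists x, P i x) -> exists x, o = Some x))) => i.
case: (classic (exists x, P i x)) => [[x Px] | noP].
  by exists (Some x); split=> [y [<-] | _]; [| exists x].
by exists None; split=> // - [x Px]; case: noP; exists x.
Qed.

Section RationalSets.
Variables (D S : finType) (phi : D -> lang S).

Lemma in_RS_ext (K : lang D) (L M : lang S) :
  lang_eq L M -> in_RS K phi L -> in_RS K phi M.
Proof.
move=> eqLM [w [Kw eqL]]; exists w; split=> //.
exact: lang_eq_trans (lang_eq_sym eqLM) eqL.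
Qed.

Lemma RS_finite_sub (K K' : lang D) :
  (forall w, K' w -> K w) -> RS_finite K phi -> RS_finite K' phi.
Proof.
move=> subK [n [f finK]]; exists n, f => L [w [K'w eqL]].
by apply: finK; exists w; split; first exact: subK.
Qed.

Lemma RS_finite_restrict (K : lang D) (Q : lang S -> Prop) :
  (forall L M, lang_eq L M -> Q L -> Q M) -> RS_finite K phi ->
  exists K' : lang D, regular K' /\ (forall w, K' w -> K w) /\
    forall L, in_RS K' phi L <-> in_RS K phi L /\ Q L.
Proof.
move=> Q_ext [n [f finK]].
pose represents i w :=
  [/\ K w, lang_eq (f i) (subst_word phi w) & Q (subst_word phi w)].
have [g gP] := fin_option_choice represents.
exists (fun w => exists i, g i = Some w).
split; first exact: regular_finite_image.
split=> [w [i /(proj1 (gP i)) []] // | L].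
split=> [[w [[i /(proj1 (gP i)) [Kw _ Qw]] eqL]] | [[w [Kw eqL]] QL]].
  by split; [exists w | apply: Q_ext Qw; exact: lang_eq_sym].
have [i eqLf] := finK L (ex_intro _ w (conj Kw eqL)).
have rep_w : represents i w.
  by split=> //; [exact: lang_eq_trans (lang_eq_sym eqLf) eqL | exact: Q_ext QL].
have [w' gi] := proj2 (gP i) (ex_intro _ w rep_w).
have [_ eqfw' _] := proj1 (gP i) w' gi.
by exists w'; split; [exists i | exact: lang_eq_trans eqLf eqfw'].
Qed.

End RationalSets.

Theorem proposition9 (D S : finType) (phi : D -> lang S) (K1 K2 : lang D) :
  reg_subst phi ->
  regular K1 -> in_plus K1 ->
  regular K2 -> in_plus K2 ->
  RS_finite K1 phi -> RS_finite K2 phi ->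
  exists K3 : lang D,
    regular K3 /\ (forall w, K3 w -> K1 w) /\
    RS_finite K3 phi /\
    (forall L : lang S,
       in_RS K3 phi L <-> (in_RS K1 phi L /\ ~ in_RS K2 phi L)).
Proof.
move=> _ _ _ _ _ finK1 _.
have notK2_ext L M : lang_eq L M -> ~ in_RS K2 phi L -> ~ in_RS K2 phi M.
  by move=> eqLM notL /(in_RS_ext (lang_eq_sym eqLM)).
have [K3 [regK3 [subK3 eqRS]]] := RS_finite_restrict notK2_ext finK1.
exists K3; split=> //; split=> //.
by split=> //; exact: RS_finite_sub subK3 finK1.
Qed.
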